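(* Let $\mathscr H$ be a reproducing kernel Hilbert space of complex-valued holomorphic functions on $\mathbb D^2$ such that multiplication by $z_1$ and by $z_2$ define bounded operators $\mathscr M_{z_1},\mathscr M_{z_2}$ on $\mathscr H$. If $\mathscr H$ has the division property, then for every $\lambda=(\lambda_1,\lambda_2)\in\mathbb D^2$ the Koszul complex of $\mathscr M_z-\lambda=(\mathscr M_{z_1}-\lambda_1,\mathscr M_{z_2}-\lambda_2)$ is exact at the middle stage; that is, whenever $g,h\in\mathscr H$ satisfy $(\mathscr M_{z_1}-\lambda_1)g+(\mathscr M_{z_2}-\lambda_2)h=0$, there exists $k\in\mathscr H$ with $g=(\mathscr M_{z_2}-\lambda_2)k$ and $h=-(\mathscr M_{z_1}-\lambda_1)k$.
   Context: $\mathbb D$ is the open unit disc. A Hilbert space $\mathscr H$ of holomorphic functions on $\mathbb D^2$ has the division property if for each $j\in\{1,2\}$, whenever $\lambda\in\mathbb D^2$ and $f\in\mathscr H$ vanishes on $\{z\in\mathbb D^2:z_j=\lambda_j\}$, the holomorphic function $f(z)/(z_j-\lambda_j)$ belongs to $\mathscr H$. For a commuting pair $T=(T_1,T_2)$ on $\mathscr H$, the Koszul complex is $0\to\mathscr H\xrightarrow{B_2}\mathscr H\oplus\mathscr H\xrightarrow{B_1}\mathscr H\to0$ with $B_2h=(T_2h,-T_1h)$ and $B_1(h_1,h_2)=T_1h_1+T_2h_2$; exactness at the middle stage means $\ker B_1=\operatorname{ran}B_2$. *)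

(* Complex numbers are [R[i]] (= complex R from
   mathcomp-real-closed) for [R : realType]; [R[i]^o] is its canonical
   normed-module structure over itself. *)
From HB Require Import structures.
From mathcomp Require Import all_boot all_order all_algebra.
From mathcomp Require Import all_classical all_reals all_analysis.
From mathcomp Require Export complex.
Export numFieldNormedType.Exports.
Import Order.TTheory GRing.Theory Num.Theory.

Set Implicit Arguments.
Unset Strict Implicit.
Unset Printing Implicit Defensive.

Local Open Scope ring_scope.

Section Defs.
Variable R : realType.
Notation C := (R[i]).

Definition bidisc : set (C * C) := fun z => `|z.1| < 1 /\ `|z.2| < 1.

Definition holomorphic_on_bidisc (f : C * C -> C) : Prop :=
  forall z : C * C, bidisc z ->
    differentiable (f : (C^o * C^o)%type -> C^o) (z : (C^o * C^o)%type).

Definition is_hilbert_inner_product (V : completeNormedModType C)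
    (ip : V -> V -> C) : Prop :=
  [/\ forall (a : C) (u v w : V), ip (a *: u + v) w = a * ip u w + ip v w,
      forall u v : V, ip u v = (ip v u)^*,
      forall u : V, 0 <= ip u u,
      forall u : V, ip u u = 0 -> u = 0
    & forall u : V, (`|u| : C) ^+ 2 = ip u u].

(* [ev] realizes the Hilbert space [V] as a reproducing kernel Hilbert space
   of holomorphic functions on D^2: each element is (via [ev]) a holomorphic
   function on D^2, the vector operations are the pointwise ones, distinct
   elements are distinct functions on D^2, and point evaluations at points
   of D^2 are continuous (reproducing kernel property). *)
Definition is_rkhs_holomorphic_bidisc (V : completeNormedModType C)
    (ev : V -> C * C -> C) : Prop :=
  [/\ forall u : V, holomorphic_on_bidisc (ev u),
      forall (a : C) (u v : V) (z : C * C), bidisc z ->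
        ev (a *: u + v) z = a * ev u z + ev v z,
      forall u v : V, (forall z, bidisc z -> ev u z = ev v z) -> u = v
    & forall z : C * C, bidisc z -> continuous (fun u : V => (ev u z : C^o))].

Definition bounded_operator (V : completeNormedModType C) (T : V -> V) : Prop :=
  (forall (a : C) (u v : V), T (a *: u + v) = a *: T u + T v) /\ continuous T.

Definition is_mult_operator (V : completeNormedModType C)
    (ev : V -> C * C -> C) (coord : C * C -> C) (M : V -> V) : Prop :=
  forall (u : V) (z : C * C), bidisc z -> ev (M u) z = coord z * ev u z.

(* Division property: for j in {1,2}, lambda in D^2 and f in H vanishing on
   {z in D^2 : z_j = lambda_j}, the holomorphic function f(z)/(z_j-lambda_j)
   belongs to H, i.e. it is (on D^2) the function of some element k of H.
   (A holomorphic function on D^2 is determined by its values off the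
   hyperplane, so it suffices to prescribe them there.) *)
Definition division_property (V : completeNormedModType C)
    (ev : V -> C * C -> C) : Prop :=
  forall (lam : C * C), bidisc lam -> forall f : V,
    ((forall z, bidisc z -> z.1 = lam.1 -> ev f z = 0) ->
      exists k : V, forall z, bidisc z -> z.1 != lam.1 ->
        ev k z = ev f z / (z.1 - lam.1)) /\
    ((forall z, bidisc z -> z.2 = lam.2 -> ev f z = 0) ->
      exists k : V, forall z, bidisc z -> z.2 != lam.2 ->
        ev k z = ev f z / (z.2 - lam.2)).

(* Exactness at the middle stage of the Koszul complex
   0 -> V --B2--> V (+) V --B1--> V -> 0 of a commuting pair (T1, T2), with
   B2 k = (T2 k, - T1 k) and B1 (g, h) = T1 g + T2 h: ker B1 = ran B2. *)
Definition koszul_exact_middle (V : completeNormedModType C)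
    (T1 T2 : V -> V) : Prop :=
  forall g h : V, T1 g + T2 h = 0 <-> exists k : V, g = T2 k /\ h = - T1 k.

End Defs.

(* If (z1 - λ1) g + (z2 - λ2) h = 0 on D^2, then on the slice {z2 = λ2} the
   function g vanishes away from the point λ, hence on the whole slice by
   continuity, and the division property gives k in H with g = (z2 - λ2) k.
   Now (z2 - λ2) (h + (z1 - λ1) k) = (z2 - λ2) h + (z1 - λ1) g = 0, so
   h + (z1 - λ1) k vanishes off {z2 = λ2}, hence everywhere by continuity in
   z2. *)

From HB Require Import structures.
From mathcomp Require Import all_boot all_order all_algebra.
From mathcomp Require Import all_classical all_reals all_analysis.
From mathcomp Require Import complex.
Import Order.TTheory GRing.Theory Num.Theory.
Local Open Scope ring_scope.
Local Open Scope classical_set_scope.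

Set Implicit Arguments.
Unset Strict Implicit.
Unset Printing Implicit Defensive.

Lemma continuous_at_dnbhs_cst (K : numFieldType) (T : topologicalType)
    (f : K -> T) (x : K) (a : T) :
  hausdorff_space T -> {for x, continuous f} ->
  (\forall t \near x^', f t = a) -> f x = a.
Proof.
move=> hT cf fa; apply: (cvg_unique hT (F := f @ x^')).
- exact: cvg_trans (cvg_app f (@nbhs_dnbhs _ x)) cf.
- exact: cvg_near_cst.
Qed.

Lemma nbhs_norm_lt (K : numFieldType) (x r : K) :
  `|x| < r -> \forall t \near x, `|t| < r.
Proof.
move=> xr; have e0 : 0 < r - `|x| by rewrite subr_gt0.
near=> t.
have tx : `|t - x| < r - `|x| by rewrite distrC; near: t; exact: cvgr_dist_lt.
rewrite -(subrK x t); apply: le_lt_trans (ler_normD _ _) _.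
by rewrite -ltrBrDr.
Unshelve. all: by end_near.
Qed.

Lemma disc_removable_cst (K : numFieldType) (T : topologicalType)
    (f : K -> T) (x : K) (a : T) :
  hausdorff_space T -> `|x| < 1 -> {for x, continuous f} ->
  (forall t, `|t| < 1 -> t != x -> f t = a) -> f x = a.
Proof.
move=> hT x1 cf fa; apply: continuous_at_dnbhs_cst => //.
near=> t; apply: fa; near: t.
- exact/nbhs_dnbhs/nbhs_norm_lt.
- exact: nbhs_dnbhs_neq.
Unshelve. all: by end_near.
Qed.

Section Bidisc.
Variable R : realType.
Notation C := R[i].

Lemma holomorphic_slice1_continuous (f : C * C -> C) (w : C * C) :
  holomorphic_on_bidisc f -> bidisc w ->
  {for w.1, continuous (fun t : C^o => (f (t, w.2) : C^o))}.
Proof.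
case: w => w1 w2 fhol bw /=.
have cpair : {for w1, continuous (fun t : C^o => ((t : C^o), (w2 : C^o)))}.
  exact: (cvg_pair (@cvg_id _ (nbhs (w1 : C^o))) (cvg_cst (w2 : C^o))).
exact: continuous_comp cpair (differentiable_continuous (fhol _ bw)).
Qed.

Lemma holomorphic_slice2_continuous (f : C * C -> C) (w : C * C) :
  holomorphic_on_bidisc f -> bidisc w ->
  {for w.2, continuous (fun t : C^o => (f (w.1, t) : C^o))}.
Proof.
case: w => w1 w2 fhol bw /=.
have cpair : {for w2, continuous (fun t : C^o => ((w1 : C^o), (t : C^o)))}.
  exact: (cvg_pair (cvg_cst (w1 : C^o)) (@cvg_id _ (nbhs (w2 : C^o)))).
exact: continuous_comp cpair (differentiable_continuous (fhol _ bw)).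
Qed.

Lemma holomorphic_slice1_eq0 (f : C * C -> C) (w : C * C) :
  holomorphic_on_bidisc f -> bidisc w ->
  (forall t, `|t| < 1 -> t != w.1 -> f (t, w.2) = 0) -> f w = 0.
Proof.
move=> fhol bw f0; have [w1 _] := bw; rewrite [w]surjective_pairing.
exact: (disc_removable_cst (@norm_hausdorff _ C^o) w1
          (holomorphic_slice1_continuous fhol bw) f0).
Qed.

Lemma holomorphic_slice2_eq0 (f : C * C -> C) (w : C * C) :
  holomorphic_on_bidisc f -> bidisc w ->
  (forall t, `|t| < 1 -> t != w.2 -> f (w.1, t) = 0) -> f w = 0.
Proof.
move=> fhol bw f0; have [_ w2] := bw; rewrite [w]surjective_pairing.
exact: (disc_removable_cst (@norm_hausdorff _ C^o) w2
          (holomorphic_slice2_continuous fhol bw) f0).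
Qed.

Lemma holomorphic_eq0_off_hyperplane2 (f : C * C -> C) (c : C) :
  holomorphic_on_bidisc f -> (forall z, bidisc z -> z.2 != c -> f z = 0) ->
  forall z, bidisc z -> f z = 0.
Proof.
move=> fhol f0 z bz; have [zc|] := eqVneq z.2 c; last exact: f0.
apply: holomorphic_slice2_eq0 => // t t1; rewrite zc => tc.
by apply: f0 => //; split => //; case: bz.
Qed.

Lemma koszul_relation_eq0_hyperplane2 (g h : C * C -> C) (lam : C * C) :
  holomorphic_on_bidisc g -> bidisc lam ->
  (forall z, bidisc z -> (z.1 - lam.1) * g z + (z.2 - lam.2) * h z = 0) ->
  forall z, bidisc z -> z.2 = lam.2 -> g z = 0.
Proof.
move=> ghol blam rel.
have g0 z : bidisc z -> z.2 = lam.2 -> z.1 != lam.1 -> g z = 0.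
  move=> bz z2 z1; have /eqP := rel z bz; rewrite z2 subrr mul0r addr0.
  by rewrite mulf_eq0 subr_eq0 (negbTE z1) => /eqP.
move=> z bz z2; have [z1|] := eqVneq z.1 lam.1; last exact: g0.
have -> : z = lam by apply: injective_projections.
apply: holomorphic_slice1_eq0 => // t t1 tl; apply: g0 => //.
by split => //; case: blam.
Qed.

End Bidisc.

Section KoszulMultipliers.
Variables (R : realType) (V : completeNormedModType R[i]).
Variable ev : V -> R[i] * R[i] -> R[i].
Hypothesis ev_lin : forall (a : R[i]) (u v : V) (z : R[i] * R[i]),
  bidisc z -> ev (a *: u + v) z = a * ev u z + ev v z.

Lemma ev0 z : bidisc z -> ev 0 z = 0.
Proof.
move=> bz; have := ev_lin 1 0 0 bz; rewrite scale1r addr0 mul1r => e.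
by apply: (addrI (ev 0 z)); rewrite addr0 -e.
Qed.

Lemma evZ a u z : bidisc z -> ev (a *: u) z = a * ev u z.
Proof. by move=> bz; rewrite -[a *: u]addr0 ev_lin // ev0 // addr0. Qed.

Lemma evD u v z : bidisc z -> ev (u + v) z = ev u z + ev v z.
Proof. by move=> bz; have := ev_lin 1 u v bz; rewrite scale1r mul1r. Qed.

Lemma evN u z : bidisc z -> ev (- u) z = - ev u z.
Proof. by move=> bz; rewrite -scaleN1r evZ // mulN1r. Qed.

Lemma ev_mult_shift (coord : R[i] * R[i] -> R[i]) (M : V -> V) :
  is_mult_operator ev coord M ->
  forall c u z, bidisc z -> ev (M u - c *: u) z = (coord z - c) * ev u z.
Proof.
by move=> Mmul c u z bz; rewrite evD // evN // evZ // Mmul // mulrBl.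
Qed.

Variables (M1 M2 : V -> V) (lam : R[i] * R[i]).
Hypotheses (M1mul : is_mult_operator ev (fun z => z.1) M1)
           (M2mul : is_mult_operator ev (fun z => z.2) M2).
Hypothesis ev_inj : forall u v : V,
  (forall z, bidisc z -> ev u z = ev v z) -> u = v.
Let T1 u := M1 u - lam.1 *: u.
Let T2 u := M2 u - lam.2 *: u.

Lemma evT1 u z : bidisc z -> ev (T1 u) z = (z.1 - lam.1) * ev u z.
Proof. exact: ev_mult_shift M1mul lam.1 u z. Qed.

Lemma evT2 u z : bidisc z -> ev (T2 u) z = (z.2 - lam.2) * ev u z.
Proof. exact: ev_mult_shift M2mul lam.2 u z. Qed.

Lemma koszul_boundary0 k : T1 (T2 k) + T2 (- T1 k) = 0.
Proof.
apply: ev_inj => z bz; rewrite ev0 // evD // evT1 // !evT2 // evN // evT1 //.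
by rewrite mulrN mulrCA subrr.
Qed.

Hypothesis ev_hol : forall u, holomorphic_on_bidisc (ev u).
Hypothesis ev_div : division_property ev.
Hypothesis lam_bidisc : bidisc lam.

Lemma koszul_kernel_range g h :
  T1 g + T2 h = 0 -> exists k, g = T2 k /\ h = - T1 k.
Proof.
move=> ker.
have rel z : bidisc z -> (z.1 - lam.1) * ev g z + (z.2 - lam.2) * ev h z = 0.
  by move=> bz; rewrite -evT1 // -evT2 // -evD // ker ev0.
have g0 := koszul_relation_eq0_hyperplane2 (ev_hol g) lam_bidisc rel.
have [k gk] := (ev_div lam_bidisc g).2 g0.
exists k; split.
  apply: ev_inj => z bz; rewrite evT2 //.
  have [z2|z2] := eqVneq z.2 lam.2; first by rewrite g0 // z2 subrr mul0r.
  by rewrite gk // mulrC divfK // subr_eq0.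
apply/eqP; rewrite -addr_eq0; apply/eqP/ev_inj => z bz; rewrite ev0 //.
apply: (holomorphic_eq0_off_hyperplane2 (c := lam.2) (ev_hol _) _ bz).
move=> {bz} z bz z2.
have nz : z.2 - lam.2 != 0 by rewrite subr_eq0.
apply: (mulfI nz); rewrite evD // evT1 // gk // mulr0 mulrDr mulrCA.
by rewrite [_ * (_ / _)]mulrC divfK // addrC rel.
Qed.

Lemma division_koszul_exact_middle : koszul_exact_middle T1 T2.
Proof.
move=> g h; split; first exact: koszul_kernel_range.
by case=> k [-> ->]; exact: koszul_boundary0.
Qed.

End KoszulMultipliers.

Theorem lemma4p3 (R : realType) (V : completeNormedModType R[i])
    (ip : V -> V -> R[i]) (ev : V -> R[i] * R[i] -> R[i]) (M1 M2 : V -> V) :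
  is_hilbert_inner_product ip ->
  is_rkhs_holomorphic_bidisc ev ->
  is_mult_operator ev (fun z => z.1) M1 -> bounded_operator M1 ->
  is_mult_operator ev (fun z => z.2) M2 -> bounded_operator M2 ->
  division_property ev ->
  forall lam : R[i] * R[i], bidisc lam ->
    koszul_exact_middle (fun u => M1 u - lam.1 *: u) (fun u => M2 u - lam.2 *: u).
Proof.
move=> _ [ev_hol ev_lin ev_inj _] M1mul _ M2mul _ ev_div lam lam_bidisc.
exact: (division_koszul_exact_middle ev_lin M1mul M2mul ev_inj ev_hol ev_div
          lam_bidisc).
Qed.
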